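(* Let $a_c\in(\pi,\frac32\pi)$ denote the smallest strictly positive solution of $\tanh(x)=\tan(x)$ and let $\alpha_{\mathrm{crit}}:=\frac{1}{a_c\sqrt2}$. Then for every $\alpha\ge\alpha_{\mathrm{crit}}$ the rate of change function satisfies $\mathit{rc}_\alpha'(x)>0$ for all $x\in(0,1)$.
   Context: For $\alpha>0$ let $\varepsilon_\alpha=\frac{1}{4\alpha^2}$. The constant $u\equiv\alpha$ solves the Helfrich Dirichlet problem $\frac{1}{u\sqrt{1+u'^2}}\frac{d}{dx}\bigl(\frac{u}{\sqrt{1+u'^2}}H'\bigr)+\frac12 H\bigl(\frac{u''}{(1+u'^2)^{3/2}}+\frac{1}{u\sqrt{1+u'^2}}\bigr)^2-2\varepsilon H=0$ in $(-1,1)$, $u(\pm1)=\alpha$, $u'(\pm1)=0$ (with $H=\frac12(\frac{1}{u\sqrt{1+u'^2}}-\frac{u''}{(1+u'^2)^{3/2}})$) for $\varepsilon=\varepsilon_\alpha$, and there is a smooth family $(u_\varepsilon)$ of solutions for $\varepsilon$ near $\varepsilon_\alpha$ with $u_{\varepsilon_\alpha}\equiv\alpha$. The rate of change function is $\mathit{rc}_\alpha:=\frac{\partial u_\varepsilon}{\partial\varepsilon}\big|_{\varepsilon=\varepsilon_\alpha}$; equivalently, $\mathit{rc}_\alpha$ is the unique solution of $\mathit{rc}_\alpha^{(iv)}+\frac{1}{\alpha^4}\mathit{rc}_\alpha=-\frac{2}{\alpha}$ in $(-1,1)$, $\mathit{rc}_\alpha(\pm1)=\mathit{rc}_\alpha'(\pm1)=0$.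 *)

From Stdlib Require Import Reals.
From Coquelicot Require Import Coquelicot.
Open Scope R_scope.

Definition tanh_ (x : R) : R := (exp x - exp (- x)) / (exp x + exp (- x)).

(* x solves tanh(x) = tan(x); tan is only defined where cos x <> 0. *)
Definition tanh_tan_sol (x : R) : Prop := cos x <> 0 /\ tanh_ x = tan x.

Definition is_ac (a : R) : Prop :=
  0 < a /\ tanh_tan_sol a /\ (forall x, 0 < x < a -> ~ tanh_tan_sol x).

Definition alpha_crit (a : R) : R := 1 / (a * sqrt 2).

Definition is_rc (alpha : R) (f : R -> R) : Prop :=
  (forall k x, (k <= 4)%nat -> ex_derive_n f k x) /\
  (forall x, -1 < x < 1 -> Derive_n f 4 x + f x / alpha ^ 4 = - 2 / alpha) /\
  f (-1) = 0 /\ f 1 = 0 /\ Derive f (-1) = 0 /\ Derive f 1 = 0.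

From Stdlib Require Import Reals Lra Psatz Lia.
From Coquelicot Require Import Coquelicot.
Open Scope R_scope.

(* Put k = 1/(alpha sqrt 2), so that 4 k^4 = 1/alpha^4.  The even solutions of
   y'''' + 4 k^4 y = 0 are spanned by cosh(kx) cos(kx) and sinh(kx) sin(kx), whose
   derivatives are -k P(kx) and k Q(kx) with P t = cosh t sin t - sinh t cos t and
   Q t = cosh t sin t + sinh t cos t.  Fitting the clamped boundary conditions gives an
   explicit solution, and it is rc_alpha: for the difference w of two solutions,
   E = w''' w - w'' w' is nonincreasing and vanishes at -1 and 1, so E = 0 and hence
   w = 0.  The explicit derivative is a positive multiple of P(k) Q(kx) - Q(k) P(kx).
   The zeros of P are exactly the solutions of tanh = tan, so P > 0 on (0, a_c), and
   there Q/P decreases since (Q/P)' = 2 (sin t cos t - sinh t cosh t) / P^2 < 0.  As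
   alpha >= alpha_crit means k <= a_c, this yields rc_alpha'(x) > 0 on (0, 1). *)

Lemma cosh_pos t : 0 < cosh t.
Proof. unfold cosh. pose proof (exp_pos t). pose proof (exp_pos (- t)). lra. Qed.

Lemma cosh_gt_1 t : t <> 0 -> 1 < cosh t.
Proof.
  intro Ht. unfold cosh.
  pose proof (exp_ineq1 t Ht). pose proof (exp_ineq1 (- t) ltac:(lra)). lra.
Qed.

Lemma sinh_pos t : 0 < t -> 0 < sinh t.
Proof. intro Ht. rewrite <- sinh_0. now apply sinh_lt. Qed.

Lemma cosh_opp t : cosh (- t) = cosh t.
Proof. unfold cosh. rewrite Ropp_involutive. lra. Qed.

Lemma sinh_opp t : sinh (- t) = - sinh t.
Proof. unfold sinh. rewrite Ropp_involutive. field. Qed.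

Lemma cosh_sqr_sub_sinh_sqr t : cosh t * cosh t - sinh t * sinh t = 1.
Proof. unfold cosh, sinh. rewrite exp_Ropp. pose proof (exp_pos t). field. lra. Qed.

Lemma sinh_2a t : sinh (2 * t) = 2 * sinh t * cosh t.
Proof.
  unfold cosh, sinh. replace (2 * t) with (t + t) by ring.
  rewrite !exp_Ropp, exp_plus. pose proof (exp_pos t). field. lra.
Qed.

Lemma is_derive_increasing f df a b : a < b ->
  (forall x, a <= x <= b -> is_derive f x (df x)) ->
  (forall x, a < x < b -> 0 < df x) -> f a < f b.
Proof.
  intros Hab Hd Hpos.
  destruct (MVT_cor2 f df a b Hab) as [c [Hc Hcab]].
  - intros c Hc. apply is_derive_Reals, Hd, Hc.
  - specialize (Hpos c Hcab). nra.
Qed.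

Lemma is_derive_nonincreasing f df a b : a < b ->
  (forall x, a <= x <= b -> is_derive f x (df x)) ->
  (forall x, a < x < b -> df x <= 0) -> f b <= f a.
Proof.
  intros Hab Hd Hneg.
  destruct (MVT_cor2 f df a b Hab) as [c [Hc Hcab]].
  - intros c Hc. apply is_derive_Reals, Hd, Hc.
  - specialize (Hneg c Hcab). nra.
Qed.

Lemma is_derive_locally_zero (f : R -> R) x l :
  locally x (fun t => f t = 0) -> is_derive f x l -> l = 0.
Proof.
  intros Hloc Hd.
  assert (H0 : is_derive f x 0).
  { apply (is_derive_ext_loc (fun _ => 0)).
    - apply (filter_imp (fun t => f t = 0)); [now intros t -> | exact Hloc].
    - apply (is_derive_const (K := R_AbsRing) (V := R_NormedModule)). }
  now rewrite <- (is_derive_unique _ _ _ Hd), (is_derive_unique _ _ _ H0).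
Qed.

Lemma locally_open_interval a b x : a < x < b -> locally x (fun t => a < t < b).
Proof. exact (open_and _ _ (open_gt a) (open_lt b) x). Qed.

Lemma sinh_gt_id t : 0 < t -> t < sinh t.
Proof.
  intro Ht.
  enough (sinh 0 - 0 < sinh t - t) by (rewrite sinh_0 in *; lra).
  apply (is_derive_increasing (fun s => sinh s - s) (fun s => cosh s - 1)); [exact Ht | |].
  - intros s _. unfold cosh, sinh. auto_derive; auto. field.
  - intros s Hs. pose proof (cosh_gt_1 s ltac:(lra)). lra.
Qed.

Lemma Rabs_sin_le t : 0 <= t -> Rabs (sin t) <= t.
Proof.
  intro Ht. pose proof (SIN_bound t).
  destruct (Rle_or_lt 1 t) as [H1 | H1].
  - apply Rabs_le. lra.
  - destruct (Req_dec t 0) as [-> | Ht0].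
    + rewrite sin_0, Rabs_R0. lra.
    + pose proof (sin_lt_x t ltac:(lra)). pose proof PI2_1.
      pose proof (sin_ge_0 t Ht ltac:(lra)). rewrite Rabs_pos_eq; lra.
Qed.

Lemma Rabs_sin_cos_lt_sinh_cosh t : 0 < t -> Rabs (sin t * cos t) < sinh t * cosh t.
Proof.
  intro Ht.
  pose proof (Rabs_sin_le (2 * t) ltac:(lra)) as Hsin.
  pose proof (sinh_gt_id (2 * t) ltac:(lra)) as Hsinh.
  rewrite sin_2a, Rmult_assoc, Rabs_mult, (Rabs_pos_eq 2) in Hsin by lra.
  rewrite sinh_2a in Hsinh.
  lra.
Qed.

Definition P t := cosh t * sin t - sinh t * cos t.
Definition Q t := cosh t * sin t + sinh t * cos t.

Lemma is_derive_P t : is_derive P t (2 * sinh t * sin t).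
Proof. unfold P, cosh, sinh. auto_derive; auto. field. Qed.

Lemma is_derive_Q t : is_derive Q t (2 * cosh t * cos t).
Proof. unfold Q, cosh, sinh. auto_derive; auto. field. Qed.

Lemma P_opp t : P (- t) = - P t.
Proof. unfold P. rewrite cosh_opp, sinh_opp, sin_neg, cos_neg. ring. Qed.

Lemma Q_opp t : Q (- t) = - Q t.
Proof. unfold Q. rewrite cosh_opp, sinh_opp, sin_neg, cos_neg. ring. Qed.

Lemma continuity_P : continuity P.
Proof.
  intro t. apply continuity_pt_filterlim, (ex_derive_continuous (V := R_NormedModule)).
  eexists. apply is_derive_P.
Qed.

Lemma tanh_tan_solP x : tanh_tan_sol x <-> P x = 0.
Proof.
  assert (Hch : exp x + exp (- x) <> 0)
    by (pose proof (exp_pos x); pose proof (exp_pos (- x)); lra).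
  unfold tanh_tan_sol, tanh_, tan, P, cosh, sinh. split.
  - intros [Hcos Heq]. field_simplify_eq in Heq; [split; assumption | lra].
  - intro HP. assert (Hcos : cos x <> 0).
    { intro Hcos. rewrite Hcos in HP. pose proof (sin2_cos2 x) as H1.
      rewrite Hcos in H1. unfold Rsqr in H1.
      assert (Hsin : sin x = 0) by (apply (Rmult_eq_reg_l ((exp x + exp (- x)) / 2)); lra).
      rewrite Hsin in H1. lra. }
    split; [exact Hcos |]. field_simplify_eq; [lra | split; assumption].
Qed.

Lemma P_pos t : 0 < t <= PI -> 0 < P t.
Proof.
  intros Ht. replace 0 with (P 0) by (unfold P; rewrite sinh_0, sin_0; ring).
  apply (is_derive_increasing P (fun s => 2 * sinh s * sin s));
    [lra | intros; apply is_derive_P |].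
  intros s Hs. pose proof (sinh_pos s ltac:(lra)).
  pose proof (sin_gt_0 s ltac:(lra) ltac:(lra)). nra.
Qed.

Section FirstRoot.

Variable ac : R.
Hypothesis Hac : is_ac ac.

Lemma P_pos_below_ac t : 0 < t < ac -> 0 < P t.
Proof.
  destruct Hac as [_ [_ Hmin]]. intro Ht. pose proof PI_RGT_0.
  destruct (Rle_or_lt t PI) as [HtPI | HtPI]; [apply P_pos; lra |].
  destruct (Rlt_or_le 0 (P t)) as [Hpos | Hneg]; [exact Hpos | exfalso].
  pose proof (P_pos PI ltac:(lra)) as HPpi.
  destruct (IVT_gen P PI t 0 continuity_P) as [z [Hz HPz]].
  { rewrite Rmin_right, Rmax_left by lra. lra. }
  rewrite Rmin_left, Rmax_right in Hz by lra.
  apply (Hmin z); [lra |]. now apply tanh_tan_solP.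
Qed.

Lemma P_ac : P ac = 0.
Proof. apply tanh_tan_solP, Hac. Qed.

Lemma sin_ac_neg : sin ac < 0.
Proof.
  pose proof PI_RGT_0 as HPI0.
  assert (HPI : PI < ac).
  { destruct (Rle_or_lt ac PI) as [H | H]; [| exact H].
    pose proof (P_pos ac ltac:(pose proof (proj1 Hac); lra)). rewrite P_ac in *. lra. }
  assert (H3PI2 : ac <= 3 * (PI / 2)).
  { destruct (Rle_or_lt ac (3 * (PI / 2))) as [H | H]; [exact H | exfalso].
    pose proof (P_pos_below_ac (3 * (PI / 2)) ltac:(lra)) as HP.
    unfold P in HP. rewrite sin_3PI2, cos_3PI2 in HP.
    pose proof (cosh_pos (3 * (PI / 2))). lra. }
  apply sin_lt_0; lra.
Qed.

End FirstRoot.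

Lemma Q_div_P_derive_numer t :
  2 * cosh t * cos t * P t - Q t * (2 * sinh t * sin t)
  = 2 * (sin t * cos t - sinh t * cosh t).
Proof.
  transitivity (2 * (sin t * cos t * (cosh t * cosh t - sinh t * sinh t)
                     - sinh t * cosh t * (sin t ^ 2 + cos t ^ 2))).
  - unfold P, Q. ring.
  - rewrite cosh_sqr_sub_sinh_sqr, <- !Rsqr_pow2, sin2_cos2. ring.
Qed.

Lemma Q_div_P_decreasing u a : 0 < u < a -> (forall t, u <= t <= a -> 0 < P t) ->
  Q a / P a < Q u / P u.
Proof.
  intros Hua HP.
  enough (- (Q u / P u) < - (Q a / P a)) by lra.
  apply (is_derive_increasing (fun t => - (Q t / P t))
           (fun t => - ((2 * cosh t * cos t * P t - Q t * (2 * sinh t * sin t)) / P t ^ 2)));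
    [lra | |].
  - intros t Ht. apply (is_derive_opp (fun t => Q t / P t)).
    apply is_derive_div; [apply is_derive_Q | apply is_derive_P | ].
    specialize (HP t Ht). lra.
  - intros t Ht. rewrite Q_div_P_derive_numer.
    pose proof (Rabs_sin_cos_lt_sinh_cosh t ltac:(lra)) as Hlt.
    pose proof (Rle_abs (sin t * cos t)).
    pose proof (pow_lt (P t) 2 (HP t ltac:(lra))).
    enough (0 < (2 * (sinh t * cosh t - sin t * cos t)) / P t ^ 2) by (unfold Rdiv in *; lra).
    apply Rdiv_lt_0_compat; lra.
Qed.

Lemma P_Q_cross_pos ac u a : is_ac ac -> 0 < u < a -> a <= ac ->
  0 < P a * Q u - Q a * P u.
Proof.
  intros Hac Hua Ha.
  assert (HPu : 0 < P u) by (apply (P_pos_below_ac ac Hac); lra).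
  destruct (Rle_lt_or_eq_dec a ac Ha) as [Hlt | ->].
  - assert (HPa : 0 < P a) by (apply (P_pos_below_ac ac Hac); lra).
    pose proof (Q_div_P_decreasing u a Hua
                  (fun t Ht => P_pos_below_ac ac Hac t ltac:(lra))) as Hdec.
    apply (Rmult_lt_compat_r (P a * P u)) in Hdec; [| nra].
    replace (Q a / P a * (P a * P u)) with (Q a * P u) in Hdec by (field; lra).
    replace (Q u / P u * (P a * P u)) with (P a * Q u) in Hdec by (field; lra).
    lra.
  - assert (HQac : Q ac = 2 * cosh ac * sin ac).
    { pose proof (P_ac ac Hac). unfold P, Q in *. lra. }
    rewrite P_ac, HQac by exact Hac.
    pose proof (cosh_pos ac). pose proof (sin_ac_neg ac Hac).
    assert (0 < cosh ac * - sin ac) by nra.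
    nra.
Qed.

Definition phi1 k x := cosh (k * x) * cos (k * x).
Definition phi2 k x := sinh (k * x) * sin (k * x).
Definition hom_even k A B x := A * phi1 k x + B * phi2 k x.
Definition dhom_even k A B x := k * (B * Q (k * x) - A * P (k * x)).

Lemma is_derive_hom_even k A B x : is_derive (hom_even k A B) x (dhom_even k A B x).
Proof. unfold hom_even, dhom_even, phi1, phi2, P, Q, cosh, sinh. auto_derive; auto. field. Qed.

Lemma is_derive_dhom_even k A B x :
  is_derive (dhom_even k A B) x (2 * k ^ 2 * hom_even k B (- A) x).
Proof. unfold hom_even, dhom_even, phi1, phi2, P, Q, cosh, sinh. auto_derive; auto. field. Qed.

Lemma hom_even_opp k A B x : hom_even k A B (- x) = hom_even k A B x.
Proof.
  unfold hom_even, phi1, phi2. replace (k * - x) with (- (k * x)) by ring.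
  rewrite cosh_opp, sinh_opp, cos_neg, sin_neg. ring.
Qed.

Lemma dhom_even_opp k A B x : dhom_even k A B (- x) = - dhom_even k A B x.
Proof.
  unfold dhom_even. replace (k * - x) with (- (k * x)) by ring.
  rewrite P_opp, Q_opp. ring.
Qed.

Definition bc_det k := phi1 k 1 * Q k + phi2 k 1 * P k.

Lemma bc_det_pos k : 0 < k -> 0 < bc_det k.
Proof.
  intro Hk.
  assert (Hdet : bc_det k = sin k * cos k * (cosh k * cosh k - sinh k * sinh k)
                            + sinh k * cosh k * (sin k ^ 2 + cos k ^ 2)).
  { unfold bc_det, phi1, phi2, P, Q. rewrite Rmult_1_r. ring. }
  rewrite Hdet, cosh_sqr_sub_sinh_sqr, <- !Rsqr_pow2, sin2_cos2.
  pose proof (Rabs_sin_cos_lt_sinh_cosh k Hk). pose proof (Rle_abs (- (sin k * cos k))).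
  rewrite Rabs_Ropp in *. lra.
Qed.

(* The n-th derivative, for n <= 4, of c0 + A phi1 + B phi2, where A and B make the
   value and the slope vanish at 1, hence also at -1 by evenness. *)
Definition clamped_sol k c0 (n : nat) : R -> R :=
  let A := - c0 * Q k / bc_det k in
  let B := - c0 * P k / bc_det k in
  match n with
  | O => fun x => c0 + hom_even k A B x
  | 1%nat => dhom_even k A B
  | 2%nat => fun x => 2 * k ^ 2 * hom_even k B (- A) x
  | 3%nat => fun x => 2 * k ^ 2 * dhom_even k B (- A) x
  | _ => fun x => 4 * k ^ 4 * hom_even k (- A) (- B) x
  end.

Lemma is_derive_clamped_sol k c0 n x : (n < 4)%nat ->
  is_derive (clamped_sol k c0 n) x (clamped_sol k c0 (S n) x).
Proof.
  intro Hn. unfold clamped_sol.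
  destruct n as [| [| [| [| n]]]]; cbv beta iota zeta; try lia.
  - rewrite <- (Rplus_0_l (dhom_even _ _ _ x)).
    apply (is_derive_plus (fun _ => c0)).
    + apply (is_derive_const (K := R_AbsRing) (V := R_NormedModule)).
    + apply is_derive_hom_even.
  - apply is_derive_dhom_even.
  - apply is_derive_scal, is_derive_hom_even.
  - replace (4 * k ^ 4) with (2 * k ^ 2 * (2 * k ^ 2)) by ring.
    rewrite Rmult_assoc. apply is_derive_scal, is_derive_dhom_even.
Qed.

Lemma clamped_sol_ode k c0 x :
  clamped_sol k c0 4 x = - (4 * k ^ 4) * (clamped_sol k c0 0 x - c0).
Proof. simpl. unfold hom_even. ring. Qed.

Lemma clamped_sol_1 k c0 x :
  clamped_sol k c0 1 x = - c0 * k * (P k * Q (k * x) - Q k * P (k * x)) / bc_det k.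
Proof. simpl. unfold dhom_even, Rdiv. ring. Qed.

Lemma clamped_sol_boundary k c0 : 0 < k ->
  clamped_sol k c0 0 1 = 0 /\ clamped_sol k c0 0 (-1) = 0 /\
  clamped_sol k c0 1 1 = 0 /\ clamped_sol k c0 1 (-1) = 0.
Proof.
  intro Hk. pose proof (bc_det_pos k Hk) as Hdet.
  assert (H0 : clamped_sol k c0 0 1 = 0).
  { simpl. unfold hom_even. unfold bc_det in *. field. lra. }
  assert (H1 : clamped_sol k c0 1 1 = 0).
  { rewrite clamped_sol_1, Rmult_1_r. unfold Rdiv. ring. }
  simpl in *. replace (-1) with (Ropp 1) by ring.
  now rewrite hom_even_opp, dhom_even_opp, H0, H1, Ropp_0.
Qed.

Lemma clamped_energy_unique c a b (w0 w1 w2 w3 w4 : R -> R) : 0 < c -> a < b ->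
  (forall t, a <= t <= b -> is_derive w0 t (w1 t)) ->
  (forall t, a <= t <= b -> is_derive w1 t (w2 t)) ->
  (forall t, a <= t <= b -> is_derive w2 t (w3 t)) ->
  (forall t, a <= t <= b -> is_derive w3 t (w4 t)) ->
  (forall t, a < t < b -> w4 t = - c * w0 t) ->
  w0 a = 0 -> w1 a = 0 -> w0 b = 0 -> w1 b = 0 ->
  forall t, a < t < b -> w0 t = 0.
Proof.
  intros Hc Hab Hd0 Hd1 Hd2 Hd3 Hode Ha0 Ha1 Hb0 Hb1.
  set (E t := w3 t * w0 t - w2 t * w1 t).
  set (dE t := w4 t * w0 t - w2 t * w2 t).
  assert (HE : forall t, a <= t <= b -> is_derive E t (dE t)).
  { intros t Ht. unfold E, dE.
    replace (w4 t * w0 t - w2 t * w2 t)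
      with (w4 t * w0 t + w3 t * w1 t - (w3 t * w1 t + w2 t * w2 t)) by ring.
    exact (is_derive_minus _ _ t _ _
             (is_derive_mult w3 w0 t _ _ (Hd3 t Ht) (Hd0 t Ht) Rmult_comm)
             (is_derive_mult w2 w1 t _ _ (Hd2 t Ht) (Hd1 t Ht) Rmult_comm)). }
  assert (HdE : forall t, a < t < b -> dE t = - (c * w0 t ^ 2 + w2 t ^ 2)).
  { intros t Ht. unfold dE. rewrite Hode by exact Ht. ring. }
  assert (HE0 : forall t, a < t < b -> E t = 0).
  { intros t Ht.
    assert (HEa : E a = 0) by (unfold E; rewrite Ha0, Ha1; ring).
    assert (HEb : E b = 0) by (unfold E; rewrite Hb0, Hb1; ring).
    assert (Hdecr : forall s1 s2, a <= s1 < s2 -> s2 <= b -> E s2 <= E s1).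
    { intros s1 s2 Hs1 Hs2. apply (is_derive_nonincreasing E dE); [lra | |].
      - intros s Hs. apply HE. lra.
      - intros s Hs. rewrite HdE by lra. nra. }
    pose proof (Hdecr a t ltac:(lra) ltac:(lra)). pose proof (Hdecr t b ltac:(lra) ltac:(lra)).
    lra. }
  intros t Ht.
  assert (HdEt : dE t = 0).
  { apply (is_derive_locally_zero E t).
    - apply (filter_imp (fun s => a < s < b)); [exact HE0 | now apply locally_open_interval].
    - apply HE. lra. }
  rewrite HdE in HdEt by exact Ht.
  pose proof (pow2_ge_0 (w0 t)). pose proof (pow2_ge_0 (w2 t)).
  assert (Hsq : w0 t ^ 2 = 0).
  { apply (Rmult_eq_reg_l c); [| lra]. nra. }
  rewrite <- Rsqr_pow2 in Hsq. now apply Rsqr_0_uniq.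
Qed.

Lemma is_rc_Derive alpha rc x : 0 < alpha -> is_rc alpha rc -> -1 < x < 1 ->
  Derive rc x = clamped_sol (/ (alpha * sqrt 2)) (- 2 * alpha ^ 3) 1 x.
Proof.
  intros Hal [Hder [Hode [Hm1 [Hp1 [Hdm1 Hdp1]]]]] Hx.
  set (k := / (alpha * sqrt 2)). set (c0 := - 2 * alpha ^ 3).
  pose proof Rlt_sqrt2_0 as Hs2.
  assert (Hk : 0 < k) by (apply Rinv_0_lt_compat; nra).
  assert (Hk4 : 4 * k ^ 4 = / alpha ^ 4).
  { unfold k. rewrite pow_inv.
    replace ((alpha * sqrt 2) ^ 4) with (alpha ^ 4 * (sqrt 2 * sqrt 2) ^ 2) by ring.
    rewrite sqrt_sqrt by lra. field. lra. }
  set (w n t := Derive_n rc n t - clamped_sol k c0 n t).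
  assert (Hw : forall n t, (n < 4)%nat -> is_derive (w n) t (w (S n) t)).
  { intros n t Hn.
    exact (is_derive_minus _ _ t _ _
             (Derive_correct _ _ (Hder (S n) t ltac:(lia)))
             (is_derive_clamped_sol k c0 n t Hn)). }
  assert (Hw_0 : forall t, w O t = rc t - clamped_sol k c0 0 t) by reflexivity.
  assert (Hw_1 : forall t, w 1%nat t = Derive rc t - clamped_sol k c0 1 t) by reflexivity.
  destruct (clamped_sol_boundary k c0 Hk) as [H0p [H0m [H1p H1m]]].
  assert (Hw0 : forall t, -1 < t < 1 -> w O t = 0).
  { apply (clamped_energy_unique (/ alpha ^ 4) (-1) 1
             _ (w 1%nat) (w 2%nat) (w 3%nat) (w 4%nat));
      try (intros; apply Hw; lia); try lra.
    - apply Rinv_0_lt_compat, pow_lt, Hal.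
    - intros t Ht. unfold w. rewrite clamped_sol_ode, Hk4.
      replace (Derive_n rc 4 t) with (- 2 / alpha - rc t / alpha ^ 4)
        by (pose proof (Hode t Ht); lra).
      unfold c0. simpl. field. lra.
    - rewrite Hw_0, Hm1, H0m. ring.
    - rewrite Hw_1, Hdm1, H1m. ring.
    - rewrite Hw_0, Hp1, H0p. ring.
    - rewrite Hw_1, Hdp1, H1p. ring. }
  rewrite <- (is_derive_unique _ _ _ (is_derive_clamped_sol k c0 0 x ltac:(lia))).
  apply Derive_ext_loc.
  apply (filter_imp (fun t => -1 < t < 1)); [| now apply locally_open_interval].
  intros t Ht. specialize (Hw0 t Ht). rewrite Hw_0 in Hw0. lra.
Qed.

Lemma alpha_crit_scale a alpha : 0 < a -> alpha >= alpha_crit a ->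
  0 < alpha /\ 0 < / (alpha * sqrt 2) <= a.
Proof.
  intros Ha Hal. unfold alpha_crit in Hal.
  pose proof Rlt_sqrt2_0 as Hs2.
  assert (Has : 0 < a * sqrt 2) by nra.
  assert (Hpos : 0 < alpha) by (pose proof (Rdiv_lt_0_compat 1 _ Rlt_0_1 Has); lra).
  assert (Hprod : 1 <= alpha * sqrt 2 * a).
  { apply Rge_le, (Rmult_le_compat_r (a * sqrt 2)) in Hal; [| lra].
    replace (1 / (a * sqrt 2) * (a * sqrt 2)) with 1 in Hal by (field; lra). lra. }
  split; [exact Hpos | split; [apply Rinv_0_lt_compat; nra |]].
  apply (Rmult_le_reg_l (alpha * sqrt 2)); [nra |].
  rewrite Rinv_r by nra. lra.
Qed.

Theorem theorem4p3 :
  forall a_c : R, is_ac a_c ->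
  forall alpha : R, alpha >= alpha_crit a_c ->
  forall rc : R -> R, is_rc alpha rc ->
  forall x : R, 0 < x < 1 -> Derive rc x > 0.
Proof.
  intros ac Hac alpha Halpha rc Hrc x Hx.
  destruct (alpha_crit_scale ac alpha (proj1 Hac) Halpha) as [Hal [Hk Hkac]].
  rewrite (is_rc_Derive alpha rc x Hal Hrc ltac:(lra)), clamped_sol_1.
  set (k := / (alpha * sqrt 2)) in *.
  pose proof (P_Q_cross_pos ac (k * x) k Hac ltac:(nra) Hkac) as Hcross.
  pose proof (bc_det_pos k Hk) as Hdet.
  pose proof (pow_lt alpha 3 Hal).
  apply Rlt_gt, Rdiv_lt_0_compat; [| exact Hdet].
  apply Rmult_lt_0_compat; [| exact Hcross].
  nra.
Qed.
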